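(* There exists a unique increasing function $u\in C^2(\mathbb{R})$ satisfying \[ u''(\xi)=(u(\xi)-\xi)\,u'(\xi),\quad \xi\in\mathbb{R}, \] such that, for some constants $c,C>0$, \[ \max\{0,\xi\}<u(\xi)<\max\{0,\xi\}+Ce^{-c|\xi|}\quad\text{for all }\xi\in\mathbb{R}. \] *)

From Stdlib Require Import Reals.
From Coquelicot Require Import Coquelicot.
Open Scope R_scope.

Definition C2 (u : R -> R) : Prop :=
  (forall x, ex_derive u x) /\
  (forall x, ex_derive (Derive u) x) /\
  (forall x, continuous (Derive (Derive u)) x).

From Stdlib Require Import Reals Lra Psatz Ranalysis5 FunctionalExtensionality.
From Coquelicot Require Import Coquelicot.
Open Scope R_scope.

(* Write d = u' and g = u - xi.  The equation reads g' = d - 1, d' = g d, which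
   conserves g^2 - 2 (d - 1 - ln d); the decay of g at +oo forces d -> 1 and the
   conserved quantity to vanish, so g = gap d with gap v = sqrt (2 (v - 1 - ln v)).
   Parametrizing the trajectory by the slope v = d in (0, 1) then gives
   du/dv = 1 / gap v and dxi/dv = 1 / (v gap v), i.e. u = height v := int_0^v 1/gap
   and xi = position v := height v - gap v.  Hence profile := height o position^-1
   is a solution, every solution is xi |-> profile (xi + k) - k for a constant k,
   and the decay of both at -oo forces k = 0. *)

Lemma is_derive_continuity_pt (f : R -> R) x l : is_derive f x l -> continuity_pt f x.
Proof.
  intros Hf. apply continuity_pt_filterlim, (ex_derive_continuous (V := R_NormedModule)).
  now exists l.
Qed.

Lemma MVT_upper_bound (f df : R -> R) a b K : a <= b ->
  (forall x, a <= x <= b -> is_derive f x (df x)) ->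
  (forall x, a <= x <= b -> df x <= K) -> f b - f a <= K * (b - a).
Proof.
  intros Hab Hf HK.
  destruct (MVT_gen f a b df) as [c [Hc ->]]; rewrite ?Rmin_left, ?Rmax_right in * by lra.
  - intros x Hx. apply Hf. lra.
  - intros x Hx. apply (is_derive_continuity_pt f x (df x)), Hf. lra.
  - apply Rmult_le_compat_r; [lra | now apply HK].
Qed.

Lemma derive_nonpos_ge (f df : R -> R) a b : a <= b ->
  (forall x, a <= x <= b -> is_derive f x (df x)) ->
  (forall x, a <= x <= b -> df x <= 0) -> f b <= f a.
Proof.
  intros Hab Hf Hdf. assert (H := MVT_upper_bound f df a b 0 Hab Hf Hdf). lra.
Qed.

Lemma derive_nonneg_le (f df : R -> R) a b : a <= b ->
  (forall x, a <= x <= b -> is_derive f x (df x)) ->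
  (forall x, a <= x <= b -> 0 <= df x) -> f a <= f b.
Proof.
  intros Hab Hf Hdf.
  enough (- f b <= - f a) by lra.
  apply (derive_nonpos_ge (fun x => - f x) (fun x => - df x)); [exact Hab | |].
  - intros x Hx. now apply (is_derive_opp f), Hf.
  - intros x Hx. specialize (Hdf x Hx). lra.
Qed.

Lemma is_derive_0_const (f : R -> R) : (forall x, is_derive f x 0) -> forall x y, f x = f y.
Proof.
  intros Hf x y.
  destruct (Rtotal_order x y) as [Hxy | [-> | Hxy]]; [| reflexivity | symmetry];
    apply (eq_is_derive f); auto.
Qed.

Lemma linear_ode_exp (y a : R -> R) : (forall x, continuous a x) ->
  (forall x, is_derive y x (a x * y x)) -> forall x, y x = y 0 * exp (RInt a 0 x).
Proof.
  intros Ha Hy.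
  set (A := fun x => RInt a 0 x).
  assert (HA : forall x, is_derive A x (a x)).
  { intros x. apply (is_derive_RInt a A 0 x); [| apply Ha].
    apply filter_forall. intros z.
    apply (RInt_correct (V := R_CompleteNormedModule)),
          (ex_RInt_continuous (V := R_CompleteNormedModule)).
    intros t _. apply Ha. }
  assert (Hz : forall x, is_derive (fun x => y x * exp (- A x)) x 0).
  { intros x. auto_derive.
    - split; [now exists (a x * y x) | split; [now exists (a x) | easy]].
    - rewrite (is_derive_unique (fun x : R => y x) x _ (Hy x)),
        (is_derive_unique (fun x : R => A x) x _ (HA x)). ring. }
  intros x.
  assert (E := is_derive_0_const _ Hz x 0). simpl in E.
  unfold A in *. rewrite RInt_point in E. change zero with 0 in E.
  rewrite Ropp_0, exp_0, Rmult_1_r in E.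
  rewrite <- E, Rmult_assoc, <- exp_plus, Rplus_opp_l, exp_0. ring.
Qed.

Lemma exp_le_compat x y : x <= y -> exp x <= exp y.
Proof. intros [Hxy | ->]; [now apply Rlt_le, exp_increasing | apply Rle_refl]. Qed.

Lemma exp_decay_eventually_lt c C m : 0 < c -> 0 < C -> 0 < m ->
  exists T, forall y, T <= y -> C * exp (- c * y) < m.
Proof.
  intros Hc HC Hm. exists ((ln (C / m) + 1) / c). intros y Hy.
  assert (Hcy : ln (C / m) + 1 <= c * y).
  { apply Rmult_le_compat_l with (r := c) in Hy; [| lra].
    now field_simplify in Hy; [| lra]. }
  assert (Hexp : exp (- c * y) < exp (- ln (C / m))) by (apply exp_increasing; lra).
  rewrite exp_Ropp, exp_ln in Hexp by (apply Rdiv_lt_0_compat; lra).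
  replace m with (C * / (C / m)) by (field; lra).
  now apply Rmult_lt_compat_l.
Qed.

Definition gap2 (v : R) : R := 2 * (v - 1 - ln v).
Definition gap (v : R) : R := sqrt (gap2 v).

Lemma gap2_1 : gap2 1 = 0.
Proof. unfold gap2. rewrite ln_1. ring. Qed.

Lemma is_derive_gap2 v : 0 < v -> is_derive gap2 v (2 * (1 - / v)).
Proof. intros Hv. unfold gap2. auto_derive; [lra | field; lra]. Qed.

Lemma gap2_ge v : 0 < v <= 1 -> (1 - v) ^ 2 <= gap2 v.
Proof.
  intros Hv.
  enough ((1 - v) ^ 2 - gap2 v <= (1 - 1) ^ 2 - gap2 1) by (rewrite gap2_1 in *; lra).
  apply (derive_nonneg_le (fun t => (1 - t) ^ 2 - gap2 t) (fun t => 2 * (1 - t) ^ 2 / t));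
    [lra | |].
  - intros t Ht. unfold gap2. auto_derive; [lra | field; lra].
  - intros t Ht. apply Rdiv_le_0_compat; [nra | lra].
Qed.

Lemma gap2_le v : 0 < v <= 1 -> gap2 v <= (1 - v) ^ 2 / v.
Proof.
  intros Hv.
  enough (gap2 v - (1 - v) ^ 2 / v <= gap2 1 - (1 - 1) ^ 2 / 1) by (rewrite gap2_1 in *; lra).
  apply (derive_nonneg_le (fun t => gap2 t - (1 - t) ^ 2 / t) (fun t => (1 - t) ^ 2 / t ^ 2));
    [lra | |].
  - intros t Ht. unfold gap2. auto_derive; [lra | field; lra].
  - intros t Ht. apply Rdiv_le_0_compat; nra.
Qed.

Lemma gap2_pos v : 0 < v < 1 -> 0 < gap2 v.
Proof. intros Hv. assert (H := gap2_ge v ltac:(lra)). nra. Qed.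

Lemma gap_pos v : 0 < v < 1 -> 0 < gap v.
Proof. intros Hv. now apply sqrt_lt_R0, gap2_pos. Qed.

Lemma gap_sq v : 0 < v < 1 -> gap v ^ 2 = gap2 v.
Proof. intros Hv. apply pow2_sqrt. assert (H := gap2_pos v Hv). lra. Qed.

Lemma gap_ge v : 0 < v < 1 -> 1 - v <= gap v.
Proof.
  intros Hv. rewrite <- (sqrt_pow2 (1 - v)) by lra.
  apply sqrt_le_1_alt, gap2_ge. lra.
Qed.

Lemma gap_sq_le v : 0 < v < 1 -> gap v ^ 2 <= (1 - v) ^ 2 / v.
Proof. intros Hv. rewrite gap_sq by exact Hv. apply gap2_le. lra. Qed.

Lemma gap_le_twice v : / 4 <= v < 1 -> gap v <= 2 * (1 - v).
Proof.
  intros Hv. assert (Hsq := gap_sq_le v ltac:(lra)). assert (Hpos := gap_pos v ltac:(lra)).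
  assert (Hle : (1 - v) ^ 2 / v <= (2 * (1 - v)) ^ 2).
  { apply Rle_div_l; [lra |].
    assert (H4 : 0 <= (1 - v) ^ 2 * (4 * v - 1)) by (apply Rmult_le_pos; nra). nra. }
  nra.
Qed.

Lemma gap_ge_of_ln_le v M : 0 < v -> 0 <= M -> ln v <= -1 - M ^ 2 / 2 -> M <= gap v.
Proof.
  intros Hv HM Hln. rewrite <- (sqrt_pow2 M) by exact HM.
  apply sqrt_le_1_alt. unfold gap2. lra.
Qed.

Lemma is_derive_gap v : 0 < v < 1 -> is_derive gap v ((1 - / v) / gap v).
Proof.
  intros Hv. assert (Hg := gap_pos v Hv). unfold gap in *.
  eapply is_derive_ext; [intros; reflexivity |].
  replace ((1 - / v) / sqrt (gap2 v)) with (2 * (1 - / v) / (2 * sqrt (gap2 v))) by (field; lra).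
  apply is_derive_sqrt; [apply is_derive_gap2 | apply gap2_pos]; lra.
Qed.

Lemma gap_antitone a b : 0 < a -> a <= b -> b < 1 -> gap b <= gap a.
Proof.
  intros Ha Hab Hb.
  apply (derive_nonpos_ge gap (fun v => (1 - / v) / gap v)); [lra | |].
  - intros t Ht. apply is_derive_gap. lra.
  - intros t Ht. assert (Hg := gap_pos t ltac:(lra)).
    assert (Ht1 : 1 < / t) by (rewrite <- Rinv_1; apply Rinv_lt_contravar; lra).
    assert (Hinv : 0 < / gap t) by (apply Rinv_0_lt_compat; lra).
    unfold Rdiv. nra.
Qed.

Lemma le_exp_half_sub_gap v : 0 < v < 1 -> v <= exp (/ 2 - gap v).
Proof.
  intros Hv. rewrite <- (exp_ln v) at 1 by lra. apply exp_le_compat.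
  assert (Hsq := gap_sq v Hv). unfold gap2 in Hsq.
  assert (H := pow2_ge_0 (gap v - 1)). nra.
Qed.

(* [gap v -> +oo] as [v -> 0+], so extending [1 / gap v] by [0] on [v <= 0] makes it
   continuous on [(-oo, 1)], and its integral from [0] differentiable there. *)
Definition inv_gap (v : R) : R := if Rle_dec v 0 then 0 else / gap v.

Lemma inv_gap_nonpos v : v <= 0 -> inv_gap v = 0.
Proof. intros Hv. unfold inv_gap. now destruct (Rle_dec v 0). Qed.

Lemma inv_gap_pos_eq v : 0 < v -> inv_gap v = / gap v.
Proof. intros Hv. unfold inv_gap. destruct (Rle_dec v 0); [lra | reflexivity]. Qed.

Lemma inv_gap_mul_gap v : 0 < v < 1 -> inv_gap v * gap v = 1.
Proof.
  intros Hv. rewrite inv_gap_pos_eq by lra.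
  apply Rinv_l. assert (H := gap_pos v Hv). lra.
Qed.

Lemma inv_gap_pos v : 0 < v < 1 -> 0 < inv_gap v.
Proof. intros Hv. rewrite inv_gap_pos_eq by lra. now apply Rinv_0_lt_compat, gap_pos. Qed.

Lemma inv_gap_le v w : v <= w -> w < 1 -> inv_gap v <= inv_gap w.
Proof.
  intros Hvw Hw. destruct (Rle_dec v 0) as [Hv | Hv].
  - rewrite inv_gap_nonpos by exact Hv.
    destruct (Rle_dec w 0); [rewrite inv_gap_nonpos by lra; lra |].
    apply Rlt_le, inv_gap_pos. lra.
  - rewrite !inv_gap_pos_eq by lra.
    apply Rinv_le_contravar; [apply gap_pos; lra | apply gap_antitone; lra].
Qed.

Lemma inv_gap_continuity_pt_0 : continuity_pt inv_gap 0.
Proof.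
  intros eps Heps. set (M := 2 / eps).
  assert (HM : 0 < M) by (apply Rdiv_lt_0_compat; lra).
  exists (Rmin 1 (exp (-1 - M ^ 2 / 2))).
  split; [apply Rmin_glb_lt; [lra | apply exp_pos] |].
  intros x [_ Hx].
  change (Rabs (x - 0) < Rmin 1 (exp (-1 - M ^ 2 / 2))) in Hx.
  change (Rabs (inv_gap x - inv_gap 0) < eps).
  rewrite (inv_gap_nonpos 0), !Rminus_0_r in * by lra.
  assert (Hx1 := Rle_lt_trans _ _ _ (Rle_abs x) (Rlt_le_trans _ _ _ Hx (Rmin_l _ _))).
  assert (Hx2 := Rle_lt_trans _ _ _ (Rle_abs x) (Rlt_le_trans _ _ _ Hx (Rmin_r _ _))).
  destruct (Rle_dec x 0) as [Hx0 | Hx0].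
  { rewrite inv_gap_nonpos, Rabs_R0 by exact Hx0. exact Heps. }
  assert (HMg : M <= gap x).
  { apply gap_ge_of_ln_le; [lra | lra |].
    rewrite <- (ln_exp (-1 - M ^ 2 / 2)). apply Rlt_le, ln_increasing; lra. }
  rewrite Rabs_right by (apply Rle_ge, Rlt_le, inv_gap_pos; lra).
  rewrite inv_gap_pos_eq by lra.
  apply Rle_lt_trans with (/ M); [apply Rinv_le_contravar; lra |].
  unfold M. rewrite Rinv_div. lra.
Qed.

Lemma inv_gap_continuous v : v < 1 -> continuous inv_gap v.
Proof.
  intros Hv. destruct (Rtotal_order v 0) as [Hneg | [-> | Hpos]].
  - apply continuous_ext_loc with (fun _ => 0); [| apply continuous_const].
    apply locally_interval with m_infty (Finite 0); [easy | easy |].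
    intros y _ Hy. now rewrite inv_gap_nonpos by (simpl in Hy; lra).
  - now apply continuity_pt_filterlim, inv_gap_continuity_pt_0.
  - apply continuous_ext_loc with (fun y => / gap y).
    + apply locally_interval with (Finite 0) (Finite 1); [easy | easy |].
      intros y Hy0 Hy1. simpl in *. now rewrite inv_gap_pos_eq.
    + apply (ex_derive_continuous (V := R_NormedModule)). eexists.
      apply is_derive_inv; [apply is_derive_gap; lra |].
      apply Rgt_not_eq, gap_pos. lra.
Qed.

Lemma inv_gap_le_inv v : v < 1 -> inv_gap v <= / (1 - v).
Proof.
  intros Hv. destruct (Rle_dec v 0) as [Hv0 | Hv0].
  - rewrite inv_gap_nonpos by exact Hv0. apply Rlt_le, Rinv_0_lt_compat. lra.
  - rewrite inv_gap_pos_eq by lra. apply Rinv_le_contravar; [lra | apply gap_ge; lra].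
Qed.

Lemma inv_gap_ge_half_inv v : / 4 <= v < 1 -> / (2 * (1 - v)) <= inv_gap v.
Proof.
  intros Hv. rewrite inv_gap_pos_eq by lra.
  apply Rinv_le_contravar; [apply gap_pos; lra | apply gap_le_twice; lra].
Qed.

Definition height (v : R) : R := RInt inv_gap 0 v.
Definition position (v : R) : R := height v - gap v.

Lemma height_0 : height 0 = 0.
Proof. unfold height. now rewrite RInt_point. Qed.

Lemma is_derive_height v : v < 1 -> is_derive height v (inv_gap v).
Proof.
  intros Hv. apply (is_derive_RInt inv_gap height 0 v); [| now apply inv_gap_continuous].
  apply locally_interval with m_infty (Finite 1); [easy | easy |].
  intros y _ Hy. simpl in Hy.
  apply (RInt_correct (V := R_CompleteNormedModule)),
    (ex_RInt_continuous (V := R_CompleteNormedModule)).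
  intros t Ht. apply inv_gap_continuous.
  apply Rle_lt_trans with (Rmax 0 y); [apply Ht | apply Rmax_lub_lt; lra].
Qed.

Lemma height_pos v : 0 < v < 1 -> 0 < height v.
Proof.
  intros Hv. apply RInt_gt_0; [lra | |]; intros t Ht.
  - apply inv_gap_pos. lra.
  - apply inv_gap_continuous. lra.
Qed.

Lemma height_le_log v : 0 <= v < 1 -> height v <= - ln (1 - v).
Proof.
  intros Hv.
  enough (- ln (1 - 0) - height 0 <= - ln (1 - v) - height v)
    by (rewrite Rminus_0_r, ln_1, height_0 in *; lra).
  apply (derive_nonneg_le (fun t => - ln (1 - t) - height t) (fun t => / (1 - t) - inv_gap t));
    [lra | |].
  - intros t Ht. apply (is_derive_minus (fun t => - ln (1 - t)) height).
    + auto_derive; [lra | field; lra].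
    + apply is_derive_height. lra.
  - intros t Ht. assert (H := inv_gap_le_inv t ltac:(lra)). lra.
Qed.

Lemma height_ge_log v : / 2 <= v < 1 -> - (ln 2 + ln (1 - v)) / 2 <= height v.
Proof.
  intros Hv.
  assert (H2 : ln (1 - / 2) = - ln 2)
    by (replace (1 - / 2) with (/ 2) by field; apply ln_Rinv; lra).
  assert (H0 := height_pos (/ 2) ltac:(lra)).
  enough (height (/ 2) + ln (1 - / 2) / 2 <= height v + ln (1 - v) / 2) by lra.
  apply (derive_nonneg_le (fun t => height t + ln (1 - t) / 2)
           (fun t => inv_gap t - / (2 * (1 - t)))); [lra | |].
  - intros t Ht. apply (is_derive_plus height (fun t => ln (1 - t) / 2)).
    + apply is_derive_height. lra.
    + auto_derive; [lra | field; lra].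
  - intros t Ht. assert (H := inv_gap_ge_half_inv t ltac:(lra)). lra.
Qed.

Lemma height_le_div_gap v : 0 < v < 1 -> height v <= v / gap v.
Proof.
  intros Hv.
  enough (0 * inv_gap v - height 0 <= v * inv_gap v - height v)
    by (rewrite height_0, inv_gap_pos_eq in * by lra; lra).
  apply (derive_nonneg_le (fun t => t * inv_gap v - height t) (fun t => inv_gap v - inv_gap t));
    [lra | |].
  - intros t Ht. apply (is_derive_minus (fun t => t * inv_gap v) height).
    + auto_derive; [easy | ring].
    + apply is_derive_height. lra.
  - intros t Ht. assert (H := inv_gap_le t v ltac:(lra) ltac:(lra)). lra.
Qed.

Lemma is_derive_position v : 0 < v < 1 -> is_derive position v (/ (v * gap v)).
Proof.
  intros Hv. assert (Hg := gap_pos v Hv).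
  replace (/ (v * gap v)) with (inv_gap v - (1 - / v) / gap v)
    by (rewrite inv_gap_pos_eq by lra; field; lra).
  apply (is_derive_minus height gap); [apply is_derive_height | apply is_derive_gap]; lra.
Qed.

Lemma position_le v : 0 < v <= / 2 -> position v <= ln 2 - gap v.
Proof.
  intros Hv. assert (H := height_le_log v ltac:(lra)).
  assert (Hln : ln (/ 2) <= ln (1 - v)) by (apply ln_le; lra).
  rewrite ln_Rinv in * by lra. unfold position. lra.
Qed.

Lemma position_ge v : / 2 <= v < 1 -> - (ln 2 + ln (1 - v)) / 2 - 1 <= position v.
Proof.
  intros Hv. assert (H := height_ge_log v Hv). assert (Hg := gap_le_twice v ltac:(lra)).
  unfold position. lra.
Qed.

Lemma position_onto xi : {v | 0 < v < 1 /\ position v = xi}.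
Proof.
  assert (Hln2 := ln_lt_2).
  set (M := Rabs xi + ln 2 + 1). assert (HM : M = Rabs xi + ln 2 + 1) by reflexivity.
  assert (Hxi : - Rabs xi <= xi <= Rabs xi) by (apply Rabs_le_between, Rle_refl).
  set (v1 := Rmin (/ 2) (exp (-1 - M ^ 2 / 2))).
  set (v2 := 1 - exp (- (2 * M))).
  assert (Hv1 : 0 < v1 <= / 2)
    by (split; [apply Rmin_glb_lt; [lra | apply exp_pos] | apply Rmin_l]).
  assert (Hv2 : / 2 < v2 < 1).
  { assert (H := exp_ineq1_le (2 * M)). assert (Hpos := exp_pos (- (2 * M))).
    unfold v2. rewrite exp_Ropp in *.
    split; [| lra]. enough (/ exp (2 * M) < / 2) by lra.
    apply Rinv_lt_contravar; [apply Rmult_lt_0_compat; [lra | apply exp_pos] | lra]. }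
  assert (HX1 : position v1 - xi < 0).
  { assert (H := position_le v1 Hv1).
    enough (M <= gap v1) by lra.
    apply gap_ge_of_ln_le; [lra | lra |].
    rewrite <- (ln_exp (-1 - M ^ 2 / 2)). apply ln_le; [lra | apply Rmin_r]. }
  assert (HX2 : 0 < position v2 - xi).
  { assert (H := position_ge v2 ltac:(lra)).
    replace (1 - v2) with (exp (- (2 * M))) in H by (unfold v2; ring).
    rewrite ln_exp in H. lra. }
  destruct (IVT_interv (fun v => position v - xi) v1 v2) as [v [Hv Hxv]];
    [| lra | exact HX1 | exact HX2 |].
  - intros v Hv. apply continuity_pt_minus; [| apply continuity_pt_const; now intros ? ?].
    apply (is_derive_continuity_pt _ _ _ (is_derive_position v ltac:(lra))).
  - exists v. split; lra.
Qed.

Section Inverse.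

Variables (f df : R -> R) (a b : R).
Hypothesis f_deriv : forall v, a < v < b -> is_derive f v (df v).
Hypothesis df_pos : forall v, a < v < b -> 0 < df v.
Hypothesis f_onto : forall y, {v | a < v < b /\ f v = y}.

Definition inverse (y : R) : R := proj1_sig (f_onto y).

Lemma inverse_in y : a < inverse y < b.
Proof. apply (proj2_sig (f_onto y)). Qed.

Lemma f_inverse y : f (inverse y) = y.
Proof. apply (proj2_sig (f_onto y)). Qed.

Lemma f_increasing v w : a < v -> v < w -> w < b -> f v < f w.
Proof.
  intros Hv Hvw Hw. apply (incr_function f (Finite a) (Finite b) df); simpl; try easy.
  - intros x Hax Hxb. now apply f_deriv.
  - intros x Hax Hxb. now apply df_pos.
Qed.

Lemma inverse_increasing y z : y < z -> inverse y < inverse z.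
Proof.
  intros Hyz. assert (Hy := inverse_in y). assert (Hz := inverse_in z).
  destruct (Rtotal_order (inverse y) (inverse z)) as [H | [H | H]]; [exact H | exfalso ..].
  - assert (E := f_equal f H). rewrite !f_inverse in E. lra.
  - assert (E := f_increasing (inverse z) (inverse y) ltac:(lra) H ltac:(lra)).
    rewrite !f_inverse in E. lra.
Qed.

Lemma inverse_le y z : y <= z -> inverse y <= inverse z.
Proof. intros [Hyz | ->]; [now apply Rlt_le, inverse_increasing | apply Rle_refl]. Qed.

Lemma inverse_f v : a < v < b -> inverse (f v) = v.
Proof.
  intros Hv. assert (Hi := inverse_in (f v)). assert (Hfi := f_inverse (f v)).
  destruct (Rtotal_order (inverse (f v)) v) as [H | [H | H]]; [exfalso | exact H | exfalso].
  - assert (E := f_increasing (inverse (f v)) v ltac:(lra) H ltac:(lra)). lra.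
  - assert (E := f_increasing v (inverse (f v)) ltac:(lra) H ltac:(lra)). lra.
Qed.

Lemma inverse_continuity_pt y : continuity_pt inverse y.
Proof.
  assert (Hlo := inverse_in (y - 1)). assert (Hhi := inverse_in (y + 1)).
  apply (continuity_pt_recip_interv f inverse (inverse (y - 1)) (inverse (y + 1)));
    rewrite ?f_inverse.
  - apply inverse_increasing. lra.
  - intros v w Hv Hvw Hw. apply f_increasing; lra.
  - intros z _ _. apply f_inverse.
  - intros z Hz1 Hz2. split; apply inverse_le; lra.
  - intros v Hv. apply (is_derive_continuity_pt f v (df v)), f_deriv. lra.
  - lra.
Qed.

Lemma is_derive_inverse y : is_derive inverse y (/ df (inverse y)).
Proof.
  assert (Hlo := inverse_in (y - 1)). assert (Hhi := inverse_in (y + 1)).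
  assert (Hy := inverse_in y).
  assert (Prf : forall v, inverse (y - 1) <= v <= inverse (y + 1) -> derivable_pt f v).
  { intros v Hv. exists (df v). apply is_derive_Reals, f_deriv. lra. }
  assert (Hmid : inverse (y - 1) <= inverse y <= inverse (y + 1))
    by (split; apply inverse_le; lra).
  assert (Hd : derivable_pt_lim f (inverse y) (df (inverse y)))
    by (apply is_derive_Reals, f_deriv; exact Hy).
  assert (H := derivable_pt_lim_recip_interv f inverse (y - 1) (y + 1) y Prf
                 (inverse_continuity_pt y) ltac:(lra) ltac:(lra) Hmid).
  rewrite (derive_pt_eq_0 f (inverse y) _ (Prf (inverse y) Hmid) Hd) in H.
  apply is_derive_Reals. rewrite <- Rdiv_1_l. apply H.
  - intros z _. apply f_inverse.
  - apply Rgt_not_eq, df_pos, Hy.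
Qed.

End Inverse.

Lemma position_deriv_pos v : 0 < v < 1 -> 0 < / (v * gap v).
Proof. intros Hv. apply Rinv_0_lt_compat, Rmult_lt_0_compat; [lra | now apply gap_pos]. Qed.

Definition slope : R -> R := inverse position 0 1 position_onto.
Definition profile (xi : R) : R := height (slope xi).

Lemma slope_in xi : 0 < slope xi < 1.
Proof. apply inverse_in. Qed.

Lemma position_slope xi : position (slope xi) = xi.
Proof. apply f_inverse. Qed.

Lemma slope_position v : 0 < v < 1 -> slope (position v) = v.
Proof. apply (inverse_f position _ 0 1 is_derive_position position_deriv_pos). Qed.

Lemma slope_le xi zeta : xi <= zeta -> slope xi <= slope zeta.
Proof. apply (inverse_le position _ 0 1 is_derive_position position_deriv_pos). Qed.

Lemma is_derive_slope xi : is_derive slope xi (slope xi * gap (slope xi)).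
Proof.
  assert (Hv := slope_in xi). assert (Hg := gap_pos _ Hv).
  replace (slope xi * gap (slope xi)) with (/ / (slope xi * gap (slope xi)))
    by (rewrite Rinv_inv; reflexivity).
  apply (is_derive_inverse position _ 0 1 is_derive_position position_deriv_pos).
Qed.

Lemma is_derive_profile xi : is_derive profile xi (slope xi).
Proof.
  assert (Hv := slope_in xi).
  replace (slope xi) with (slope xi * gap (slope xi) * inv_gap (slope xi))
    by (rewrite Rmult_assoc, (Rmult_comm (gap _)), (inv_gap_mul_gap _ Hv); ring).
  apply (is_derive_comp height slope); [apply is_derive_height; lra | apply is_derive_slope].
Qed.

Lemma profile_sub xi : profile xi - xi = gap (slope xi).
Proof. assert (H := position_slope xi). unfold position in H. unfold profile. lra. Qed.

Lemma Derive_profile : Derive profile = slope.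
Proof. apply functional_extensionality. intros xi. apply is_derive_unique, is_derive_profile. Qed.

Lemma Derive_Derive_profile xi : Derive (Derive profile) xi = slope xi * gap (slope xi).
Proof. rewrite Derive_profile. apply is_derive_unique, is_derive_slope. Qed.

Lemma profile_C2 : C2 profile.
Proof.
  split; [| split]; intros xi.
  - eexists. apply is_derive_profile.
  - rewrite Derive_profile. eexists. apply is_derive_slope.
  - apply continuous_ext with (fun xi => slope xi * gap (slope xi)).
    { intros z. now rewrite Derive_Derive_profile. }
    apply (ex_derive_continuous (V := R_NormedModule)). eexists.
    apply (is_derive_mult slope (fun z => gap (slope z)));
      [apply is_derive_slope | | intros; apply Rmult_comm].
    apply (is_derive_comp gap slope); [apply is_derive_gap, slope_in | apply is_derive_slope].
Qed.

Lemma profile_increasing xi zeta : xi < zeta -> profile xi < profile zeta.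
Proof.
  intros Hxz. apply (incr_function profile m_infty p_infty slope); try easy.
  - intros x _ _. apply is_derive_profile.
  - intros x _ _. apply slope_in.
Qed.

Lemma profile_ode xi : Derive (Derive profile) xi = (profile xi - xi) * Derive profile xi.
Proof. rewrite Derive_Derive_profile, profile_sub, Derive_profile. ring. Qed.

Lemma profile_pos xi : 0 < profile xi.
Proof. apply height_pos, slope_in. Qed.

Lemma profile_le_left xi : xi <= 0 -> profile xi <= exp (/ 2) / gap (slope 0) * exp xi.
Proof.
  intros Hxi. assert (Hv := slope_in xi). assert (Hv0 := slope_in 0).
  assert (Hle := slope_le xi 0 Hxi). set (v := slope xi) in *. set (v0 := slope 0) in *.
  assert (Hg0 := gap_pos v0 Hv0). assert (Hgap : gap v0 <= gap v) by (apply gap_antitone; lra).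
  assert (Hheight := height_le_div_gap v Hv).
  assert (Hv_exp : v <= exp (/ 2) * exp xi).
  { rewrite <- exp_plus. apply Rle_trans with (exp (/ 2 - gap v)).
    - now apply le_exp_half_sub_gap.
    - apply exp_le_compat. assert (H := profile_sub xi). assert (H' := profile_pos xi).
      fold v in H. lra. }
  unfold profile. fold v. apply Rle_trans with (v / gap v0).
  - apply Rle_trans with (v / gap v); [exact Hheight |].
    apply Rmult_le_compat_l; [lra | apply Rinv_le_contravar; lra].
  - unfold Rdiv. assert (Hinv : 0 < / gap v0) by (apply Rinv_0_lt_compat; lra). nra.
Qed.

Lemma profile_le_right xi : 0 <= xi -> profile xi - xi <= exp (- xi) / slope 0.
Proof.
  intros Hxi. assert (Hv := slope_in xi). assert (Hv0 := slope_in 0).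
  assert (Hle := slope_le 0 xi Hxi). assert (Hpos := position_slope xi).
  rewrite profile_sub. set (v := slope xi) in *. set (v0 := slope 0) in *.
  assert (Hg := gap_pos v Hv).
  assert (H1v : 1 - v <= exp (- xi)).
  { rewrite <- (exp_ln (1 - v)) by lra. apply exp_le_compat.
    assert (Hh := height_le_log v ltac:(lra)). unfold position in Hpos. lra. }
  assert (Hgap : gap v <= (1 - v) / v0).
  { assert (Hsq := gap_sq_le v Hv).
    assert (Hinv : / v <= / v0) by (apply Rinv_le_contravar; lra).
    assert (Hinv1 : 1 <= / v0) by (rewrite <- Rinv_1; apply Rinv_le_contravar; lra).
    assert (Hsq' : gap v ^ 2 <= ((1 - v) / v0) ^ 2).
    { unfold Rdiv in *. rewrite Rpow_mult_distr.
      apply Rle_trans with ((1 - v) ^ 2 * / v); [exact Hsq |].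
      apply Rmult_le_compat_l; nra. }
    assert (Hnonneg : 0 <= (1 - v) / v0) by (apply Rdiv_le_0_compat; lra).
    nra. }
  apply Rle_trans with ((1 - v) / v0); [exact Hgap |].
  apply Rmult_le_compat_r; [apply Rlt_le, Rinv_0_lt_compat; lra | exact H1v].
Qed.

Lemma profile_front_bound : exists c C, 0 < c /\ 0 < C /\
  forall xi, Rmax 0 xi < profile xi /\ profile xi < Rmax 0 xi + C * exp (- c * Rabs xi).
Proof.
  assert (Hv0 := slope_in 0). assert (Hg0 := gap_pos _ Hv0).
  set (A := exp (/ 2) / gap (slope 0)). set (B := / slope 0).
  assert (HA : 0 < A) by (apply Rdiv_lt_0_compat; [apply exp_pos | lra]).
  assert (HB : 0 < B) by (apply Rinv_0_lt_compat; lra).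
  exists 1, (A + B). split; [lra | split; [lra |]]. intros xi.
  assert (Hsub := profile_sub xi). assert (Hgap := gap_pos _ (slope_in xi)).
  assert (Hpos := profile_pos xi).
  split; [apply Rmax_lub_lt; lra |].
  destruct (Rle_dec xi 0) as [Hxi | Hxi].
  - rewrite Rmax_left, Rabs_left1 by lra. replace (- (1) * - xi) with xi by ring.
    assert (H := profile_le_left xi Hxi). fold A in H. assert (He := exp_pos xi). nra.
  - rewrite Rmax_right, Rabs_right by lra. replace (- (1) * xi) with (- xi) by ring.
    assert (H := profile_le_right xi ltac:(lra)). assert (He := exp_pos (- xi)).
    unfold Rdiv in H. fold B in H. nra.
Qed.

Section Uniqueness.

Variables (u d : R -> R).
Hypothesis u_deriv : forall x, is_derive u x (d x).
Hypothesis d_deriv : forall x, is_derive d x ((u x - x) * d x).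
Hypothesis u_increasing : forall x y, x < y -> u x < u y.
Hypothesis above_diagonal : forall x, x < u x.
Hypothesis sub_eventually_lt : forall m, 0 < m -> exists T, forall x, T <= x -> u x - x < m.

Lemma is_derive_sub_id x : is_derive (fun y => u y - y) x (d x - 1).
Proof. apply (is_derive_minus u (fun y => y)); [apply u_deriv | apply (is_derive_id x)]. Qed.

Lemma sol_deriv_pos x : 0 < d x.
Proof.
  assert (Hexp : forall x, d x = d 0 * exp (RInt (fun y => u y - y) 0 x)).
  { apply linear_ode_exp; [| exact d_deriv]. intros y.
    apply (ex_derive_continuous (V := R_NormedModule)). eexists. apply is_derive_sub_id. }
  rewrite Hexp. apply Rmult_lt_0_compat; [| apply exp_pos].
  destruct (Rlt_le_dec 0 (d 0)) as [H | H]; [exact H | exfalso].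
  assert (Hu : u 1 <= u 0).
  { apply (derive_nonpos_ge u d); [lra | intros y _; apply u_deriv |].
    intros y _. rewrite Hexp. assert (E := exp_pos (RInt (fun y => u y - y) 0 y)). nra. }
  assert (Hinc := u_increasing 0 1 ltac:(lra)). lra.
Qed.

Lemma sol_deriv_increasing x y : x < y -> d x < d y.
Proof.
  intros Hxy. apply (incr_function d m_infty p_infty (fun x => (u x - x) * d x));
    [intros t _ _; apply d_deriv | | easy | exact Hxy | easy].
  intros t _ _. assert (H := above_diagonal t).
  apply Rmult_lt_0_compat; [lra | apply sol_deriv_pos].
Qed.

Lemma sol_deriv_lt_1 x : d x < 1.
Proof.
  destruct (Rlt_le_dec (d x) 1) as [H | H]; [exact H | exfalso].
  assert (Hg := above_diagonal (x + 1)).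
  destruct (sub_eventually_lt (u (x + 1) - (x + 1))) as [T HT]; [lra |].
  set (y := Rmax (x + 1) T).
  assert (Hlo : u (x + 1) - (x + 1) <= u y - y).
  { apply (derive_nonneg_le (fun t => u t - t) (fun t => d t - 1)); [apply Rmax_l | |].
    - intros t _. apply is_derive_sub_id.
    - intros t Ht. assert (Hd := sol_deriv_increasing x t ltac:(lra)). lra. }
  assert (Hy := HT y (Rmax_r _ _)). lra.
Qed.

Lemma sol_deriv_approaches_1 eps T : 0 < eps -> exists x, T <= x /\ 1 - eps < d x.
Proof.
  intros Heps. assert (Hg := above_diagonal T).
  set (s := (u T - T) / eps + 1).
  assert (Hs : eps * s = u T - T + eps) by (unfold s; field; lra).
  assert (Hq : 0 < (u T - T) / eps) by (apply Rdiv_lt_0_compat; lra).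
  assert (Hs0 : 0 < s) by (unfold s; lra).
  exists (T + s). split; [lra |].
  destruct (Rlt_le_dec (1 - eps) (d (T + s))) as [H | H]; [exact H | exfalso].
  (* Otherwise [u - id] decreases at rate at least [eps] on [[T, T + s]] and turns negative. *)
  assert (Hup : (u (T + s) - (T + s)) - (u T - T) <= - eps * (T + s - T)).
  { apply (MVT_upper_bound (fun t => u t - t) (fun t => d t - 1)); [lra | |].
    - intros t _. apply is_derive_sub_id.
    - intros t Ht. destruct (Req_dec t (T + s)) as [-> | Hne]; [lra |].
      assert (Hd := sol_deriv_increasing t (T + s) ltac:(lra)). lra. }
  assert (Hg' := above_diagonal (T + s)).
  replace (- eps * (T + s - T)) with (- (eps * s)) in Hup by ring. lra.
Qed.

Lemma is_derive_sol_energy x : is_derive (fun y => (u y - y) ^ 2 - gap2 (d y)) x 0.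
Proof.
  assert (Hd := sol_deriv_pos x). unfold gap2. auto_derive.
  - repeat split; try (eexists; apply u_deriv); try (eexists; apply d_deriv); exact Hd.
  - rewrite (is_derive_unique (fun y : R => u y) x _ (u_deriv x)),
      (is_derive_unique (fun y : R => d y) x _ (d_deriv x)).
    field. lra.
Qed.

Lemma sol_energy_small eps : 0 < eps <= / 4 ->
  exists x, Rabs ((u x - x) ^ 2 - gap2 (d x)) < 2 * eps ^ 2.
Proof.
  intros Heps.
  destruct (sub_eventually_lt eps ltac:(lra)) as [T HT].
  destruct (sol_deriv_approaches_1 eps T ltac:(lra)) as [x [HTx Hx]].
  exists x.
  assert (Hsub := HT x HTx). assert (Hpos := above_diagonal x).
  assert (Hd1 := sol_deriv_lt_1 x).
  assert (Hlo := gap2_ge (d x) ltac:(lra)). assert (Hhi := gap2_le (d x) ltac:(lra)).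
  assert (Hdiv : (1 - d x) ^ 2 / d x <= 2 * (1 - d x) ^ 2).
  { apply Rle_div_l; [lra |].
    assert (H2 : 0 <= (1 - d x) ^ 2 * (2 * d x - 1)) by (apply Rmult_le_pos; nra). nra. }
  apply Rabs_def1; nra.
Qed.

Lemma sol_sub_sq x : (u x - x) ^ 2 = gap2 (d x).
Proof.
  set (e := (u x - x) ^ 2 - gap2 (d x)).
  enough (e = 0) by (unfold e in *; lra).
  destruct (Req_dec e 0) as [He | He]; [exact He | exfalso].
  assert (Habs := Rabs_pos_lt e He).
  set (eps := Rmin (/ 4) (Rabs e / 2)).
  assert (Heps : 0 < eps <= / 4) by (split; [apply Rmin_glb_lt; lra | apply Rmin_l]).
  assert (Heps_e : eps <= Rabs e / 2) by apply Rmin_r.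
  destruct (sol_energy_small eps Heps) as [y Hy].
  rewrite (is_derive_0_const _ is_derive_sol_energy y x) in Hy. fold e in Hy.
  nra.
Qed.

Lemma sol_sub_eq_gap x : u x - x = gap (d x).
Proof.
  unfold gap. rewrite <- sol_sub_sq, sqrt_pow2; [reflexivity |].
  assert (H := above_diagonal x). lra.
Qed.

Lemma sol_shifted_profile : exists k, forall x, u x = profile (x + k) - k.
Proof.
  set (K := fun x => height (d x) - u x).
  assert (HK : forall x, is_derive K x 0).
  { intros x. assert (Hd := sol_deriv_pos x). assert (Hd1 := sol_deriv_lt_1 x).
    replace 0 with ((u x - x) * d x * inv_gap (d x) - d x)
      by (rewrite sol_sub_eq_gap; transitivity (d x * (inv_gap (d x) * gap (d x)) - d x);
          [ring | rewrite inv_gap_mul_gap by lra; ring]).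
    apply (is_derive_minus (fun x => height (d x)) u); [| apply u_deriv].
    apply (is_derive_comp height d); [apply is_derive_height; lra | apply d_deriv]. }
  exists (K 0). intros x.
  assert (HKx := is_derive_0_const K HK x 0).
  assert (Hslope : slope (x + K 0) = d x).
  { rewrite <- (slope_position (d x)) by (split; [apply sol_deriv_pos | apply sol_deriv_lt_1]).
    f_equal. rewrite <- HKx. unfold K, position. rewrite <- sol_sub_eq_gap. ring. }
  unfold profile. rewrite Hslope, <- HKx. unfold K. ring.
Qed.

End Uniqueness.

Lemma front_gap_eventually_lt (f : R -> R) c C : 0 < c -> 0 < C ->
  (forall xi, f xi < Rmax 0 xi + C * exp (- c * Rabs xi)) ->
  forall m, 0 < m -> exists T, forall xi, T <= xi -> f xi - xi < m.
Proof.
  intros Hc HC Hf m Hm.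
  destruct (exp_decay_eventually_lt c C m Hc HC Hm) as [T HT].
  exists (Rmax T 0). intros xi Hxi.
  assert (Rmax_T := Rmax_l T 0). assert (Rmax_0 := Rmax_r T 0).
  specialize (Hf xi). rewrite Rmax_right, Rabs_right in Hf by lra.
  specialize (HT xi ltac:(lra)). lra.
Qed.

Lemma front_eventually_lt_left (f : R -> R) c C : 0 < c -> 0 < C ->
  (forall xi, f xi < Rmax 0 xi + C * exp (- c * Rabs xi)) ->
  forall m, 0 < m -> exists T, forall xi, xi <= T -> f xi < m.
Proof.
  intros Hc HC Hf m Hm.
  destruct (exp_decay_eventually_lt c C m Hc HC Hm) as [T HT].
  exists (- Rmax T 0). intros xi Hxi.
  assert (Rmax_T := Rmax_l T 0). assert (Rmax_0 := Rmax_r T 0).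
  specialize (Hf xi). rewrite Rmax_left, Rabs_left1 in Hf by lra.
  specialize (HT (- xi) ltac:(lra)). lra.
Qed.

Lemma shift_of_left_vanishing_eq0 (f g : R -> R) k :
  (forall x, 0 < f x) -> (forall x, 0 < g x) ->
  (forall m, 0 < m -> exists T, forall x, x <= T -> f x < m) ->
  (forall m, 0 < m -> exists T, forall x, x <= T -> g x < m) ->
  (forall x, f x = g (x + k) - k) -> k = 0.
Proof.
  intros Hf Hg Hf0 Hg0 Hfg.
  destruct (Rtotal_order k 0) as [Hk | [Hk | Hk]]; [exfalso | exact Hk | exfalso].
  - destruct (Hf0 (- k)) as [T HT]; [lra |].
    specialize (HT T (Rle_refl T)). rewrite Hfg in HT.
    specialize (Hg (T + k)). lra.
  - destruct (Hg0 k Hk) as [T HT].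
    specialize (HT T (Rle_refl T)). specialize (Hfg (T - k)).
    replace (T - k + k) with T in Hfg by ring. specialize (Hf (T - k)). lra.
Qed.

Theorem proposition1p3 :
  exists! u : R -> R,
    C2 u /\
    (forall x y, x < y -> u x < u y) /\
    (forall xi, Derive (Derive u) xi = (u xi - xi) * Derive u xi) /\
    (exists c C, 0 < c /\ 0 < C /\
       forall xi, Rmax 0 xi < u xi /\ u xi < Rmax 0 xi + C * exp (- c * Rabs xi)).
Proof.
  destruct profile_front_bound as (c0 & C0 & Hc0 & HC0 & Hbound0).
  exists profile. split.
  { split; [exact profile_C2 |]. split; [exact profile_increasing |].
    split; [exact profile_ode |]. now exists c0, C0. }
  intros u ((Hu1 & Hu2 & _) & Hinc & Hode & c & C & Hc & HC & Hbound).
  assert (Hd : forall x, is_derive u x (Derive u x)) by (intros x; now apply Derive_correct).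
  assert (Hdd : forall x, is_derive (Derive u) x ((u x - x) * Derive u x))
    by (intros x; rewrite <- Hode; now apply Derive_correct).
  assert (Hlower : forall x, 0 < u x /\ x < u x)
    by (intros x; destruct (Hbound x) as [H _]; assert (H0 := Rmax_l 0 x);
        assert (Hx := Rmax_r 0 x); lra).
  assert (Hupper := fun xi => proj2 (Hbound xi)).
  destruct (sol_shifted_profile u (Derive u) Hd Hdd Hinc (fun x => proj2 (Hlower x))
              (front_gap_eventually_lt u c C Hc HC Hupper)) as [k Hk].
  assert (Hk0 : k = 0).
  { apply (shift_of_left_vanishing_eq0 u profile k (fun x => proj1 (Hlower x)) profile_pos).
    - exact (front_eventually_lt_left u c C Hc HC Hupper).
    - exact (front_eventually_lt_left profile c0 C0 Hc0 HC0 (fun xi => proj2 (Hbound0 xi))).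
    - exact Hk. }
  apply functional_extensionality. intros x.
  now rewrite Hk, Hk0, Rplus_0_r, Rminus_0_r.
Qed.
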